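(* Fix a threshold $R\in(0,1)$ and, when $\Delta_S^B\neq 0$, let $\tilde i=\Delta_O^B/\Delta_S^B$. Then: (i) if $|\Delta_S^B|\le 2\Delta_O^B$, every type $i\in[-1/2,1/2]$ accepts the recommendation; (ii) if $\Delta_S^B<-2\Delta_O^B$, every type $i\ge\tilde i$ accepts the recommendation; (iii) if $\Delta_S^B>2\Delta_O^B$, every type $i\le\tilde i$ accepts the recommendation.
   Context: Setting. Consumer types are $i\in[-1/2,1/2]$, distributed according to a continuous cumulative distribution function $F$ with full support on $[-1/2,1/2]$. A product has a quality vector $(Q_1,Q_2)\in\{0,1\}^2$; a type-$i$ consumer gets payoff $(1/2+i)Q_1+(1/2-i)Q_2$ from it. The versions $(1,1),(1,0),(0,1),(0,0)$ have prior probabilities $q_H,q_1,q_2,q_L$ respectively, all strictly positive and summing to $1$. One product carries a recommendation from a sender whose type is drawn from $F$ independently of the product; given a threshold $R\in(0,1)$, the sender gives a buy recommendation $B$ if her payoff from the product is at least $R$ and a don't-buy recommendation $D$ otherwise. Let $\phi_1(R)=1-F(R-1/2)$, $\phi_2(R)=F(1/2-R)$, $\pi^B=q_H+q_1\phi_1(R)+q_2\phi_2(R)$ and $\pi^D=1-\pi^B$. Posteriors: $p^B_H=q_H/\pi^B$, $p^B_1=q_1\phi_1(R)/\pi^B$, $p^B_2=q_2\phi_2(R)/\pi^B$, $p^B_L=0$; $p^D_H=0$, $p^D_1=q_1(1-\phi_1(R))/\pi^D$, $p^D_2=q_2(1-\phi_2(R))/\pi^D$, $p^D_L=q_L/\pi^D$.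 For $r\in\{B,D\}$ let $U_i^r=p_H^r+(1/2+i)p_1^r+(1/2-i)p_2^r$ and $U_i^0=q_H+(1/2+i)q_1+(1/2-i)q_2$. A receiver of type $i$ accepts the recommendation if $U_i^B\ge U_i^0$ (equivalently, $U_i^0\ge U_i^D$). The objective and subjective effects of $r\in\{B,D\}$ are $\Delta_O^r=p_H^r-q_H+\frac{p_1^r-q_1}{2}+\frac{p_2^r-q_2}{2}$ and $\Delta_S^r=(p_2^r-q_2)-(p_1^r-q_1)$. *)

From Stdlib Require Import Reals Lra.
Open Scope R_scope.

Definition is_cdf_full_support (F : R -> R) : Prop :=
  continuity F /\
  (forall x y, x <= y -> F x <= F y) /\
  (forall x, x <= -1/2 -> F x = 0) /\
  (forall x, 1/2 <= x -> F x = 1) /\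
  (forall x y, -1/2 <= x -> x < y -> y <= 1/2 -> F x < F y).

(* prior probabilities of versions (1,1),(1,0),(0,1),(0,0) *)
Definition valid_prior (qH q1 q2 qL : R) : Prop :=
  0 < qH /\ 0 < q1 /\ 0 < q2 /\ 0 < qL /\ qH + q1 + q2 + qL = 1.

Definition phi1 (F : R -> R) (Rt : R) : R := 1 - F (Rt - 1/2).
Definition phi2 (F : R -> R) (Rt : R) : R := F (1/2 - Rt).

Definition piB (F : R -> R) (qH q1 q2 : R) (Rt : R) : R :=
  qH + q1 * phi1 F Rt + q2 * phi2 F Rt.

(* posteriors after a buy recommendation B *)
Definition pBH F qH q1 q2 Rt : R := qH / piB F qH q1 q2 Rt.
Definition pB1 F qH q1 q2 Rt : R := q1 * phi1 F Rt / piB F qH q1 q2 Rt.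
Definition pB2 F qH q1 q2 Rt : R := q2 * phi2 F Rt / piB F qH q1 q2 Rt.

Definition UB F qH q1 q2 Rt (i : R) : R :=
  pBH F qH q1 q2 Rt + (1/2 + i) * pB1 F qH q1 q2 Rt + (1/2 - i) * pB2 F qH q1 q2 Rt.
Definition U0 (qH q1 q2 : R) (i : R) : R :=
  qH + (1/2 + i) * q1 + (1/2 - i) * q2.

Definition accepts F qH q1 q2 Rt (i : R) : Prop := UB F qH q1 q2 Rt i >= U0 qH q1 q2 i.

Definition DeltaOB F qH q1 q2 Rt : R :=
  pBH F qH q1 q2 Rt - qH + (pB1 F qH q1 q2 Rt - q1) / 2 + (pB2 F qH q1 q2 Rt - q2) / 2.
Definition DeltaSB F qH q1 q2 Rt : R :=
  (pB2 F qH q1 q2 Rt - q2) - (pB1 F qH q1 q2 Rt - q1).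

(* Accepting B is linear in the type: U^B_i - U^0_i = Delta_O^B - i Delta_S^B.
   Hence every type in [-1/2, 1/2] accepts when |Delta_S^B| <= 2 Delta_O^B, and
   otherwise acceptance is a half-line bounded by the root Delta_O^B / Delta_S^B.
   Which half-line is decided by the sign of Delta_S^B, and that sign is forced
   by Delta_O^B >= 0: a buy recommendation never lowers the expected payoff of
   the neutral type i = 0, because it rules out the worst version (0,0) and
   keeps the best version (1,1). *)

From Stdlib Require Import Reals Lra Psatz.
Open Scope R_scope.

Lemma accepts_iff F qH q1 q2 Rt i :
  accepts F qH q1 q2 Rt i <-> i * DeltaSB F qH q1 q2 Rt <= DeltaOB F qH q1 q2 Rt.
Proof.
  unfold accepts, UB, U0, DeltaOB, DeltaSB; split; intro; lra.
Qed.

Lemma cdf_bounds F x : is_cdf_full_support F -> 0 <= F x <= 1.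
Proof.
  intros [_ [Hmono [Hleft [Hright _]]]]; split.
  - destruct (Rle_dec x (-1/2)) as [Hx | Hx].
    + rewrite Hleft; lra.
    + rewrite <- (Hleft (-1/2)) by lra; apply Hmono; lra.
  - destruct (Rle_dec (1/2) x) as [Hx | Hx].
    + rewrite Hright; lra.
    + rewrite <- (Hright (1/2)) by lra; apply Hmono; lra.
Qed.

(* [m] is the prior expected payoff of type 0 and [s] the probability of a
   version (1,0) or (0,1) together with a buy recommendation. The expression is
   affine in [s], equal to [qH (1 - m)] at [s = 0] and to [m qL] at [s = q1 + q2]. *)
Lemma buy_gain_numerator_nonneg qH q1 q2 qL s :
  0 <= qH -> 0 <= q1 -> 0 <= q2 -> 0 <= qL -> qH + q1 + q2 + qL = 1 ->
  0 <= s <= q1 + q2 ->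
  let m := qH + (q1 + q2) / 2 in
  0 <= qH * (1 - m) + s * (1/2 - m).
Proof.
  intros HqH Hq1 Hq2 HqL Hsum Hs m.
  destruct (Rle_dec m (1/2)) as [Hm | Hm]; unfold m in *; nra.
Qed.

Lemma DeltaOB_nonneg F qH q1 q2 qL Rt :
  valid_prior qH q1 q2 qL ->
  0 <= phi1 F Rt <= 1 -> 0 <= phi2 F Rt <= 1 ->
  0 <= DeltaOB F qH q1 q2 Rt.
Proof.
  intros [HqH [Hq1 [Hq2 [HqL Hsum]]]] Ha Hb.
  unfold DeltaOB, pBH, pB1, pB2.
  set (a := phi1 F Rt) in *; set (b := phi2 F Rt) in *.
  set (P := piB F qH q1 q2 Rt).
  assert (HP : P = qH + q1 * a + q2 * b) by reflexivity.
  assert (HPpos : 0 < P) by nra.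
  assert (Hnum := buy_gain_numerator_nonneg qH q1 q2 qL (q1 * a + q2 * b)
                    ltac:(lra) ltac:(lra) ltac:(lra) ltac:(lra) Hsum ltac:(nra)).
  simpl in Hnum.
  replace (qH / P - qH + (q1 * a / P - q1) / 2 + (q2 * b / P - q2) / 2)
    with ((qH * (1 - (qH + (q1 + q2) / 2))
           + (q1 * a + q2 * b) * (1/2 - (qH + (q1 + q2) / 2))) / P)
    by (field_simplify_eq; [rewrite HP; ring | lra]).
  apply Rmult_le_pos; [exact Hnum | left; apply Rinv_0_lt_compat; exact HPpos].
Qed.

Lemma mul_le_of_abs_le_half x y c :
  Rabs y <= 2 * c -> -1/2 <= x <= 1/2 -> x * y <= c.
Proof.
  intros Hy Hx.
  assert (Habs : Rabs (x * y) <= 1/2 * (2 * c)).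
  { rewrite Rabs_mult; apply Rmult_le_compat; try apply Rabs_pos; auto.
    apply Rabs_le; lra. }
  pose proof (Rle_abs (x * y)); lra.
Qed.

Lemma mul_le_of_div_le_neg x y c : y < 0 -> c / y <= x -> x * y <= c.
Proof.
  intros Hy Hx.
  apply Rmult_le_compat_neg_l with (r := y) in Hx; [|lra].
  replace (y * (c / y)) with c in Hx by (field; lra); lra.
Qed.

Lemma mul_le_of_le_div_pos x y c : 0 < y -> x <= c / y -> x * y <= c.
Proof.
  intros Hy Hx.
  apply Rmult_le_compat_l with (r := y) in Hx; [|lra].
  replace (y * (c / y)) with c in Hx by (field; lra); lra.
Qed.

Theorem corollary1 (F : R -> R) (qH q1 q2 qL Rt : R) :
  is_cdf_full_support F ->
  valid_prior qH q1 q2 qL ->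
  0 < Rt < 1 ->
  let DO := DeltaOB F qH q1 q2 Rt in
  let DS := DeltaSB F qH q1 q2 Rt in
  let itilde := DO / DS in
  (Rabs DS <= 2 * DO ->
     forall i, -1/2 <= i <= 1/2 -> accepts F qH q1 q2 Rt i) /\
  (DS < -2 * DO ->
     forall i, -1/2 <= i <= 1/2 -> itilde <= i -> accepts F qH q1 q2 Rt i) /\
  (DS > 2 * DO ->
     forall i, -1/2 <= i <= 1/2 -> i <= itilde -> accepts F qH q1 q2 Rt i).
Proof.
  intros HF Hprior _ DO DS itilde.
  assert (HDO : 0 <= DO).
  { apply DeltaOB_nonneg with qL; [exact Hprior | |];
      unfold phi1, phi2; pose proof (cdf_bounds F (Rt - 1/2) HF);
      pose proof (cdf_bounds F (1/2 - Rt) HF); lra. }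
  split; [|split].
  - intros HDS i Hi; apply accepts_iff.
    exact (mul_le_of_abs_le_half i DS DO HDS Hi).
  - intros HDS i _ Hit; apply accepts_iff.
    exact (mul_le_of_div_le_neg i DS DO ltac:(lra) Hit).
  - intros HDS i _ Hit; apply accepts_iff.
    exact (mul_le_of_le_div_pos i DS DO ltac:(lra) Hit).
Qed.
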